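(* Fix $A\in\mathbb R$, $T>0$ and $b\ge0$. There is $C=C(A,b,T)$, not depending on $\epsilon$, such that for all sufficiently small $\epsilon>0$, all $t\in[0,\epsilon^{-2}T]$, all $v\in[0,1]$, all $x,y\in\mathbb Z_{\ge0}$ and all integers $n$ with $|n|\le\lceil t^{1/2}\rceil$ and $x+n\ge0$, $$|\mathbf p_t^R(x+n,y)-\mathbf p_t^R(x,y)|\le C\,(1\wedge t^{-(1+v)/2})\,|n|^v\,e^{-b|x-y|(1\wedge t^{-1/2})}.$$ When $b=0$ this holds for all integers $n$ with $x+n\ge0$.
   Context: Let $p_t(x)$, $x\in\mathbb Z$, denote the whole-line semi-discrete heat kernel, i.e. the solution of $\partial_tp_t(x)=\frac12\Delta p_t(x)$, $p_0(x)=1_{\{x=0\}}$, where $\Delta f(x)=f(x+1)+f(x-1)-2f(x)$. For $\epsilon>0$ let $\mu_A=1-A\epsilon$. The half-line Robin heat kernel is, for $t\ge0$ and $x,y\in\mathbb Z_{\ge0}$, $$\mathbf p_t^R(x,y)=p_t(x-y)+\mu_Ap_t(x+y+1)+(1-\mu_A^{-2})\sum_{z=2}^\infty p_t(x+y+z)\mu_A^z.$$ *)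

From Stdlib Require Import Reals Lra Lia ZArith ClassicalEpsilon.
Open Scope R_scope.

(* Value of the series sum_{k>=0} f k, i.e. the limit of its partial sums
   (chosen by classical choice; meaningful when the series converges,
   which is the case for all series used below). *)
Definition series (f : nat -> R) : R :=
  epsilon (inhabits 0) (fun l => Un_cv (fun N => sum_f_R0 f N) l).

(* Whole-line semi-discrete heat kernel p_t(x) = e^{-t} I_{|x|}(t),
   the solution of d/dt p = (1/2) Delta p, p_0 = 1_{x=0}. *)
Definition heat (t : R) (x : Z) : R :=
  exp (- t) *
  series (fun k => (t / 2) ^ (2 * k + Z.abs_nat x)
                   / (INR (fact k) * INR (fact (k + Z.abs_nat x)))).

Definition muA (A eps : R) : R := 1 - A * eps.

Definition robin (A eps t : R) (x y : Z) : R :=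
  let mu := muA A eps in
  heat t (x - y) + mu * heat t (x + y + 1)
  + (1 - / (mu ^ 2)) *
    series (fun k => heat t (x + y + Z.of_nat (k + 2)) * mu ^ (k + 2)).

(* 1 /\ t^{-a} for t >= 0, a >= 0 (equal to 1 at t = 0, where t^{-a} = +oo). *)
Definition min1_negpow (t a : R) : R :=
  if Rlt_dec 0 t then Rmin 1 (Rpower t (- a)) else 1.

(* r^v for r >= 0, with 0^0 = 1 and 0^v = 0 for v > 0. *)
Definition rpow (r v : R) : R :=
  if Rlt_dec 0 r then Rpower r v else if Req_EM_T v 0 then 1 else 0.

(* Write the whole-line kernel as p_t(w) = sum_k pi(k) pi(k + |w|), with pi the Poisson
   weights of mean t/2.  Tilting by rho^|w| = exp (beta s |w|), s = 1 /\ t^(-1/2), turns the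
   two factors into Poisson weights of means (t/2) rho^(-1) and (t/2) rho at the price of
   exp ((t/2) (rho + 1/rho - 2)), which stays bounded because t s^2 <= 1.  The local limit
   bound pi(j)^2 mean <= 8 and the unimodality of the weights then give
   p_t(w) <~ s exp (-beta s |w|) and |p_t(w + 1) - p_t(w)| <~ s^2 exp (-beta s |w|).
   In the Robin kernel the tail series is O(1/eps) (its terms decay like exp (-eps k) once
   beta absorbs mu_A^k), while its prefactor 1 - mu_A^(-2) is O(eps); this is where
   t <= T eps^(-2) enters.  The v = 0 bound follows from the sup bound, the v = 1 bound from
   the gradient bound by telescoping, and general v by interpolating 1 /\ |n| s. *)

From Stdlib Require Import Reals Lra Lia ZArith ClassicalEpsilon.
Open Scope R_scope.

(** * Series *)

Lemma exp_le_exp x y : x <= y -> exp x <= exp y.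
Proof. intros [h|h]; [left; now apply exp_increasing | subst; lra]. Qed.

Lemma exp_lt_1 x : x < 0 -> exp x < 1.
Proof. intros h. rewrite <- exp_0. now apply exp_increasing. Qed.

Lemma exp_pow x n : exp x ^ n = exp (INR n * x).
Proof.
  induction n as [|n IH]; [simpl; now rewrite Rmult_0_l, exp_0|].
  rewrite S_INR, <- tech_pow_Rmult, IH, <- exp_plus. f_equal. ring.
Qed.

Lemma bernoulli_le x n : 0 <= x <= 1 -> 1 - INR n * x <= (1 - x) ^ n.
Proof.
  intros hx. induction n as [|n IH]; [simpl; lra|].
  rewrite S_INR, <- tech_pow_Rmult. pose proof (pos_INR n).
  pose proof (pow_le (1 - x) n ltac:(lra)). nra.
Qed.

Definition has_sum (f : nat -> R) (l : R) : Prop := Un_cv (fun N => sum_f_R0 f N) l.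

Lemma series_of_has_sum f l : has_sum f l -> series f = l.
Proof.
  intros H. unfold series.
  apply (UL_sequence (fun N => sum_f_R0 f N)); [|exact H].
  apply (epsilon_spec (inhabits 0) (fun l => has_sum f l)). now exists l.
Qed.

Lemma has_sum_ext f g l : (forall k, f k = g k) -> has_sum f l -> has_sum g l.
Proof.
  intros E H e he. destruct (H e he) as [N HN]. exists N. intros n hn.
  rewrite <- (sum_eq f g n) by auto. now apply HN.
Qed.

Lemma has_sum_minus f g l1 l2 :
  has_sum f l1 -> has_sum g l2 -> has_sum (fun k => f k - g k) (l1 - l2).
Proof.
  intros H1 H2 e he. destruct (CV_minus _ _ _ _ H1 H2 e he) as [N HN].
  exists N. intros n hn. rewrite minus_sum. now apply HN.
Qed.

Lemma has_sum_scal f l c : has_sum f l -> has_sum (fun k => c * f k) (c * l).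
Proof.
  intros H e he. assert (Hc : Un_cv (fun _ => c) c).
  { intros e' he'. exists 0%nat. intros. unfold Rdist. rewrite Rminus_diag, Rabs_R0. lra. }
  destruct (CV_mult _ _ c l Hc H e he) as [N HN].
  exists N. intros n hn.
  replace (sum_f_R0 (fun k => c * f k) n) with (c * sum_f_R0 f n); [now apply HN|].
  rewrite scal_sum. apply sum_eq. intros; ring.
Qed.

Lemma has_sum_abs_le f l B :
  has_sum f l -> (forall N, sum_f_R0 (fun k => Rabs (f k)) N <= B) -> Rabs l <= B.
Proof.
  intros H HB. apply Rnot_lt_le. intros hlt.
  destruct (cv_cvabs _ _ H (Rabs l - B) ltac:(lra)) as [N HN].
  specialize (HN N (le_n N)). unfold Rdist in HN.
  pose proof (Rabs_triang_gen f N). specialize (HB N).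
  apply Rabs_def2 in HN. lra.
Qed.

Lemma has_sum_of_abs_le f g lg :
  (forall k, Rabs (f k) <= g k) -> has_sum g lg -> exists l, has_sum f l /\ Rabs l <= lg.
Proof.
  intros Hfg Hg.
  assert (Habs : {l | has_sum (fun k => Rabs (f k)) l}).
  { apply (Rseries_CV_comp _ g); [|now exists lg].
    intros k. split; [apply Rabs_pos | apply Hfg]. }
  destruct (cv_cauchy_2 _ (cauchy_abs _ (cv_cauchy_1 _ Habs))) as [l Hl].
  exists l. split; [exact Hl|].
  exact (sum_cv_maj g (fun k _ => f k) 0 l lg Hl Hg Hfg).
Qed.

Lemma geometric_has_sum M r : 0 <= r < 1 -> has_sum (fun k => M * r ^ k) (M / (1 - r)).
Proof.
  intros hr. apply has_sum_scal.
  apply (has_sum_ext (fun k => 1 * r ^ k)); [intros; ring|].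
  apply GP_infinite. rewrite Rabs_right; lra.
Qed.

Lemma exp_has_sum x : has_sum (fun k => x ^ k / INR (fact k)) (exp x).
Proof.
  unfold exp. destruct (exist_exp x) as [l Hl]. simpl.
  apply (has_sum_ext (fun k => / INR (fact k) * x ^ k)); [intros; unfold Rdiv; ring|].
  exact Hl.
Qed.

Lemma sum_shift_le (g : nat -> R) i L :
  (forall k, 0 <= g k) -> sum_f_R0 (fun l => g (i + l)%nat) L <= sum_f_R0 g (i + L).
Proof.
  intros Hg. induction L as [|L IH].
  - rewrite Nat.add_0_r. destruct i as [|i]; [simpl; lra|].
    rewrite tech5. simpl. rewrite Nat.add_0_r. pose proof (cond_pos_sum g i Hg). lra.
  - rewrite tech5, Nat.add_succ_r, tech5. lra.
Qed.

Lemma has_sum_term_le f l n : has_sum f l -> (forall k, 0 <= f k) -> f n <= l.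
Proof.
  intros H Hf. eapply Rle_trans; [|exact (sum_incr f n l H Hf)].
  destruct n as [|n]; [simpl; lra|].
  rewrite tech5. pose proof (cond_pos_sum f n Hf). lra.
Qed.

(** * Poisson weights *)

Definition poisson (mu : R) (j : nat) : R := exp (- mu) * mu ^ j / INR (fact j).

Lemma poisson_nonneg mu j : 0 <= mu -> 0 <= poisson mu j.
Proof.
  intros h. unfold poisson. pose proof (exp_pos (- mu)). pose proof (INR_fact_lt_0 j).
  apply Rmult_le_pos; [apply Rmult_le_pos; [lra | now apply pow_le]|].
  left. now apply Rinv_0_lt_compat.
Qed.

Lemma poisson_has_sum mu : has_sum (poisson mu) 1.
Proof.
  rewrite <- exp_0, <- (Rplus_opp_l mu), exp_plus.
  apply (has_sum_ext (fun k => exp (- mu) * (mu ^ k / INR (fact k)))).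
  - intros k. unfold poisson, Rdiv. ring.
  - apply has_sum_scal, exp_has_sum.
Qed.

Lemma poisson_window_sum_le1 mu i L :
  0 <= mu -> sum_f_R0 (fun l => poisson mu (i + l)) L <= 1.
Proof.
  intros h. eapply Rle_trans; [apply sum_shift_le; intros; now apply poisson_nonneg|].
  apply sum_incr; [apply poisson_has_sum | intros; now apply poisson_nonneg].
Qed.

Lemma poisson_le1 mu j : 0 <= mu -> poisson mu j <= 1.
Proof.
  intros h. pose proof (poisson_window_sum_le1 mu j 0 h) as H.
  simpl in H. now rewrite Nat.add_0_r in H.
Qed.

Lemma poisson_succ mu j : poisson mu (S j) = poisson mu j * mu / INR (S j).
Proof.
  unfold poisson. rewrite fact_simpl, mult_INR, <- tech_pow_Rmult.
  pose proof (INR_fact_neq_0 j). pose proof (not_0_INR (S j) (Nat.neq_succ_0 j)).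
  field. auto.
Qed.

Lemma poisson_le_succ mu j : 0 <= mu -> INR (S j) <= mu -> poisson mu j <= poisson mu (S j).
Proof.
  intros h hj. rewrite poisson_succ. pose proof (poisson_nonneg mu j h).
  pose proof (lt_0_INR (S j) (Nat.lt_0_succ j)).
  unfold Rdiv. rewrite Rmult_assoc. rewrite <- (Rmult_1_r (poisson mu j)) at 1.
  apply Rmult_le_compat_l; [lra|].
  apply (Rmult_le_reg_r (INR (S j))); [lra|]. rewrite Rmult_assoc, Rinv_l; lra.
Qed.

Lemma poisson_succ_le mu j : 0 <= mu -> mu <= INR (S j) -> poisson mu (S j) <= poisson mu j.
Proof.
  intros h hj. rewrite poisson_succ. pose proof (poisson_nonneg mu j h).
  pose proof (lt_0_INR (S j) (Nat.lt_0_succ j)).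
  unfold Rdiv. rewrite Rmult_assoc. rewrite <- (Rmult_1_r (poisson mu j)) at 2.
  apply Rmult_le_compat_l; [lra|].
  apply (Rmult_le_reg_r (INR (S j))); [lra|]. rewrite Rmult_assoc, Rinv_l; lra.
Qed.

Lemma poisson_tilt lam rho j :
  poisson lam j * rho ^ j = exp (lam * (rho - 1)) * poisson (lam * rho) j.
Proof.
  unfold poisson. rewrite Rpow_mult_distr.
  replace (exp (- lam)) with (exp (lam * (rho - 1)) * exp (- (lam * rho)))
    by (rewrite <- exp_plus; f_equal; ring).
  field. apply INR_fact_neq_0.
Qed.

(* The weights increase up to the mode and decrease after it.  While increasing, the partial
   variation is at most the last weight reached; once decreasing, at most [2 M] minus it. *)
Lemma poisson_variation_le mu M a N :
  0 <= mu -> (forall j, poisson mu j <= M) ->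
  sum_f_R0 (fun k => Rabs (poisson mu (S (a + k)) - poisson mu (a + k))) N <= 2 * M.
Proof.
  intros hmu HM.
  assert (Inv : forall N, sum_f_R0 (fun k => Rabs (poisson mu (S (a + k)) - poisson mu (a + k))) N
    <= if Rle_dec (INR (S (a + N))) mu then poisson mu (S (a + N))
       else 2 * M - poisson mu (S (a + N))).
  { intros n. induction n as [|n IH].
    - simpl sum_f_R0. rewrite Nat.add_0_r. pose proof (poisson_nonneg mu a hmu).
      pose proof (poisson_nonneg mu (S a) hmu). pose proof (HM a).
      destruct (Rle_dec (INR (S a)) mu) as [h|h].
      + pose proof (poisson_le_succ mu a hmu h). rewrite Rabs_right; lra.
      + pose proof (poisson_succ_le mu a hmu ltac:(lra)). rewrite Rabs_left1; lra.
    - rewrite tech5, Nat.add_succ_r. set (j := S (a + n)) in *.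
      pose proof (poisson_nonneg mu (S j) hmu). pose proof (HM j).
      assert (INR (S j) = INR j + 1) by apply S_INR.
      destruct (Rle_dec (INR j) mu) as [h1|h1], (Rle_dec (INR (S j)) mu) as [h2|h2].
      + pose proof (poisson_le_succ mu j hmu h2). rewrite Rabs_right; lra.
      + pose proof (poisson_succ_le mu j hmu ltac:(lra)). rewrite Rabs_left1; lra.
      + lra.
      + pose proof (poisson_succ_le mu j hmu ltac:(lra)). rewrite Rabs_left1; lra. }
  specialize (Inv N). pose proof (HM (S (a + N))). pose proof (poisson_nonneg mu (S (a + N)) hmu).
  destruct (Rle_dec (INR (S (a + N))) mu); lra.
Qed.

Lemma geometric_growth (u : nat -> R) r m n :
  0 <= r -> (forall k, (k < n)%nat -> r * u (m + k)%nat <= u (m + S k)%nat) ->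
  r ^ n * u m <= u (m + n)%nat.
Proof.
  intros hr. induction n as [|n IH]; intros H.
  - rewrite Nat.add_0_r. simpl. lra.
  - rewrite <- tech_pow_Rmult, Rmult_assoc.
    eapply Rle_trans; [|apply H; lia].
    apply Rmult_le_compat_l; [lra|]. apply IH. intros k hk. apply H. lia.
Qed.

Lemma exists_nat_sqrt_bracket x : 0 <= x -> exists L : nat, INR L ^ 2 <= x < (INR L + 1) ^ 2.
Proof.
  intros hx. pose proof (sqrt_pos x) as hs. pose proof (sqrt_sqrt x hx) as hss.
  destruct (base_Int_part (sqrt x)) as [b1 b2].
  assert (hz : (0 <= Int_part (sqrt x))%Z).
  { assert (h : (-1 < Int_part (sqrt x))%Z) by (apply lt_IZR; lra). lia. }
  exists (Z.to_nat (Int_part (sqrt x))).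
  rewrite INR_IZR_INZ, Z2Nat.id by exact hz. apply IZR_le in hz.
  set (z := IZR (Int_part (sqrt x))) in *. split.
  - rewrite <- hss. simpl. rewrite Rmult_1_r. apply Rmult_le_compat; lra.
  - rewrite <- hss. simpl. rewrite Rmult_1_r. apply Rmult_le_0_lt_compat; lra.
Qed.

Section PoissonWindow.

Variables (mu : R) (i L : nat).
Hypothesis (hmu : 0 < mu) (hL : 4 * INR L ^ 2 <= mu).

Let L_le_mu : INR L <= mu.
Proof.
  destruct L as [|n]; [simpl; lra|].
  pose proof (le_INR 1 (S n) ltac:(lia)). simpl in *. nra.
Qed.

Let window_ratio l d : (l <= L)%nat -> 4 * INR L ^ 2 <= d -> INR L <= d -> 0 < d ->
  3 / 4 <= (1 - INR L / d) ^ l.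
Proof.
  intros hl hd1 hd2 hd. pose proof (pos_INR L). apply le_INR in hl.
  assert (hx : 0 <= INR L / d <= 1).
  { split; [apply Rmult_le_pos; [lra|]; left; now apply Rinv_0_lt_compat|].
    apply (Rmult_le_reg_r d); [lra|]. unfold Rdiv. rewrite Rmult_assoc, Rinv_l; lra. }
  assert (hq : INR L * (INR L / d) <= 1 / 4).
  { apply (Rmult_le_reg_r d); [lra|]. unfold Rdiv.
    replace (INR L * (INR L * / d) * d) with (INR L ^ 2) by (field; lra). lra. }
  eapply Rle_trans; [|apply bernoulli_le; exact hx]. nra.
Qed.

Lemma poisson_window_up l : INR i <= mu -> (l <= L)%nat ->
  3 / 4 * poisson mu i <= poisson mu (i + l).
Proof.
  intros hi hl. pose proof (pos_INR L).
  set (r := 1 - INR L / (mu + INR L)).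
  assert (Hg : r ^ l * poisson mu i <= poisson mu (i + l)).
  { apply geometric_growth.
    - unfold r. replace (1 - INR L / (mu + INR L)) with (mu / (mu + INR L)) by (field; lra).
      apply Rmult_le_pos; [lra|]. left; apply Rinv_0_lt_compat; lra.
    - intros k hk. rewrite Nat.add_succ_r, poisson_succ.
      pose proof (poisson_nonneg mu (i + k) ltac:(lra)).
      assert (hik : INR (S (i + k)) <= mu + INR L)
        by (rewrite S_INR, plus_INR; pose proof (le_INR (S k) L ltac:(lia)) as h;
            rewrite S_INR in h; lra).
      pose proof (lt_0_INR _ (Nat.lt_0_succ (i + k))).
      unfold r. replace (1 - INR L / (mu + INR L)) with (mu / (mu + INR L)) by (field; lra).
      unfold Rdiv. rewrite Rmult_comm, Rmult_assoc.
      apply Rmult_le_compat_l; [lra|]. apply Rmult_le_compat_l; [lra|].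
      apply Rinv_le_contravar; lra. }
  eapply Rle_trans; [|exact Hg]. apply Rmult_le_compat_r; [apply poisson_nonneg; lra|].
  apply window_ratio; lra || lia.
Qed.

Lemma poisson_window_down l : mu <= INR i -> (l <= L)%nat ->
  3 / 4 * poisson mu i <= poisson mu (i - L + l).
Proof.
  intros hi hl. pose proof (pos_INR L). pose proof L_le_mu.
  assert (hLi : (L <= i)%nat) by (apply INR_le; lra).
  set (r := 1 - INR L / mu).
  assert (Hg : r ^ (L - l) * poisson mu i <= poisson mu (i - (L - l))).
  { replace i with (i - 0)%nat at 1 by lia. replace (L - l)%nat with (0 + (L - l))%nat at 3 by lia.
    apply (geometric_growth (fun k => poisson mu (i - k)) r 0 (L - l)).
    - unfold r. replace (1 - INR L / mu) with ((mu - INR L) / mu) by (field; lra).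
      apply Rmult_le_pos; [lra|]. left; apply Rinv_0_lt_compat; lra.
    - intros k hk. simpl.
      assert (E : poisson mu (i - k) = poisson mu (i - S k) * mu / INR (i - k)).
      { replace (i - k)%nat with (S (i - S k)) at 1 by lia. rewrite poisson_succ.
        do 3 f_equal. lia. }
      rewrite E. pose proof (poisson_nonneg mu (i - S k) ltac:(lra)).
      assert (hik : mu - INR L <= INR (i - k)).
      { pose proof (le_INR (S k) L ltac:(lia)) as h. rewrite S_INR in h.
        rewrite minus_INR by lia. lra. }
      assert (0 < INR (i - k)) by (apply lt_0_INR; lia).
      unfold r. replace ((1 - INR L / mu) * (poisson mu (i - S k) * mu / INR (i - k)))
        with (poisson mu (i - S k) * ((mu - INR L) / INR (i - k))) by (field; lra).
      rewrite <- (Rmult_1_r (poisson mu (i - S k))) at 2. apply Rmult_le_compat_l; [lra|].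
      apply (Rmult_le_reg_r (INR (i - k))); [lra|]. unfold Rdiv.
      rewrite Rmult_assoc, Rinv_l; lra. }
  replace (i - L + l)%nat with (i - (L - l))%nat by lia.
  eapply Rle_trans; [|exact Hg]. apply Rmult_le_compat_r; [apply poisson_nonneg; lra|].
  apply window_ratio; lra || lia.
Qed.

End PoissonWindow.

(* Local limit bound [poisson mu i <= C / sqrt mu]: the weights stay above [3/4] of
   [poisson mu i] on a window of [sqrt mu / 2] indices next to [i], and have total mass 1. *)
Lemma poisson_sq_mul_le mu i : 0 <= mu -> poisson mu i ^ 2 * mu <= 8.
Proof.
  intros hmu0. destruct (Req_dec mu 0) as [->|hne]; [lra|].
  assert (hmu : 0 < mu) by lra.
  destruct (exists_nat_sqrt_bracket (mu / 4) ltac:(lra)) as [L [hL1 hL2]].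
  assert (Hwin : exists j, forall l, (l <= L)%nat -> 3 / 4 * poisson mu i <= poisson mu (j + l)).
  { destruct (Rle_dec (INR i) mu) as [hi|hi].
    - exists i. intros l. apply poisson_window_up; lra.
    - exists (i - L)%nat. intros l. apply poisson_window_down; lra. }
  destruct Hwin as [j Hj].
  pose proof (sum_Rle _ _ L (fun l hl => Hj l hl)) as Hsum.
  rewrite sum_cte, S_INR in Hsum. pose proof (poisson_window_sum_le1 mu j L hmu0).
  pose proof (poisson_nonneg mu i hmu0). pose proof (pos_INR L).
  assert (hQ : poisson mu i * (INR L + 1) <= 4 / 3) by lra.
  assert (0 <= poisson mu i * (INR L + 1)) by (apply Rmult_le_pos; lra).
  apply Rle_trans with (4 * (poisson mu i * (INR L + 1)) ^ 2); [|nra].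
  replace (4 * (poisson mu i * (INR L + 1)) ^ 2) with (poisson mu i ^ 2 * (4 * (INR L + 1) ^ 2))
    by ring.
  apply Rmult_le_compat_l; [nra | lra].
Qed.

(** * The whole-line kernel *)

Lemma heat_has_sum t w : 0 <= t ->
  has_sum (fun k => poisson (t / 2) k * poisson (t / 2) (k + Z.abs_nat w)) (heat t w).
Proof.
  intros ht. set (a := Z.abs_nat w). set (lam := t / 2).
  assert (hlam : 0 <= lam) by (unfold lam; lra).
  set (term := fun k => lam ^ k / INR (fact k)).
  assert (Hterm : forall k, 0 <= term k <= exp lam).
  { assert (Hpos : forall k, 0 <= term k).
    { intros k. unfold term. apply Rmult_le_pos; [now apply pow_le|].
      left; apply Rinv_0_lt_compat, INR_fact_lt_0. }
    intros k. split; [easy|]. now apply has_sum_term_le; [apply exp_has_sum|]. }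
  set (f := fun k => (t / 2) ^ (2 * k + a) / (INR (fact k) * INR (fact (k + a)))).
  assert (Ef : forall k, f k = term k * term (k + a)%nat).
  { intros k. unfold f, term. fold lam. replace (2 * k + a)%nat with (k + (k + a))%nat by lia.
    rewrite pow_add. pose proof (INR_fact_neq_0 k). pose proof (INR_fact_neq_0 (k + a)).
    field. auto. }
  destruct (Rseries_CV_comp f (fun k => exp lam * term k)) as [l Hl].
  { intros k. rewrite Ef. destruct (Hterm k), (Hterm (k + a)%nat).
    split; [now apply Rmult_le_pos|]. rewrite Rmult_comm. now apply Rmult_le_compat_r. }
  { exists (exp lam * exp lam). apply has_sum_scal, exp_has_sum. }
  unfold heat. fold a. fold f. rewrite (series_of_has_sum f l Hl).
  apply (has_sum_ext (fun k => exp (- t) * f k)); [|now apply has_sum_scal].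
  intros k. rewrite Ef. unfold term, poisson.
  replace (exp (- t)) with (exp (- lam) * exp (- lam))
    by (rewrite <- exp_plus; f_equal; unfold lam; lra).
  unfold Rdiv. ring.
Qed.

Lemma heat_nonneg t w : 0 <= t -> 0 <= heat t w.
Proof.
  intros ht. pose proof (heat_has_sum t w ht) as H.
  assert (Hpos : forall k, 0 <= poisson (t / 2) k * poisson (t / 2) (k + Z.abs_nat w))
    by (intros k; apply Rmult_le_pos; apply poisson_nonneg; lra).
  eapply Rle_trans; [apply (Hpos 0%nat) | exact (has_sum_term_le _ _ 0 H Hpos)].
Qed.

Lemma heat_opp t w : heat t (- w) = heat t w.
Proof.
  unfold heat. now replace (Z.abs_nat (- w)) with (Z.abs_nat w) by (destruct w; reflexivity).
Qed.

Lemma poisson_pair_tilt lam rho k a : 0 < rho ->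
  poisson lam k * poisson lam (k + a) * rho ^ a
  = exp (lam * (rho + / rho - 2)) * poisson (lam * / rho) k * poisson (lam * rho) (k + a).
Proof.
  intros hr.
  replace (poisson lam k * poisson lam (k + a) * rho ^ a)
    with ((poisson lam k * (/ rho) ^ k) * (poisson lam (k + a) * rho ^ (k + a)))
    by (rewrite pow_add, pow_inv; field; apply pow_nonzero; lra).
  rewrite !poisson_tilt.
  replace (lam * (rho + / rho - 2)) with (lam * (/ rho - 1) + lam * (rho - 1)) by ring.
  rewrite exp_plus. ring.
Qed.

Lemma damped_diff_le e q M u1 u0 r : 0 <= e -> 0 <= q -> q <= M -> 0 <= u1 -> 0 < r <= 1 ->
  Rabs (r * (e * q * u1) - e * q * u0) <= e * M * (Rabs (u1 - u0) + (1 - r) * u1).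
Proof.
  intros he hq hqM hu hr.
  replace (r * (e * q * u1) - e * q * u0) with (e * q * ((u1 - u0) + - ((1 - r) * u1))) by ring.
  rewrite Rabs_mult, Rabs_right by (apply Rle_ge, Rmult_le_pos; lra).
  apply Rmult_le_compat; [apply Rmult_le_pos; lra | apply Rabs_pos
    | apply Rmult_le_compat_l; lra |].
  eapply Rle_trans; [apply Rabs_triang|].
  rewrite Rabs_Ropp, (Rabs_right ((1 - r) * u1)) by (apply Rle_ge, Rmult_le_pos; lra).
  lra.
Qed.

Section TiltedHeat.

Variables (t rho : R).
Hypothesis (ht : 0 <= t) (hrho : 0 < rho).

Let lam := t / 2.
Let tilt := exp (lam * (rho + / rho - 2)).

Let hlam : 0 <= lam.
Proof. unfold lam. lra. Qed.

Let hlam_up : 0 <= lam * rho.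
Proof. apply Rmult_le_pos; lra. Qed.

Let hlam_down : 0 <= lam * / rho.
Proof. apply Rmult_le_pos; [lra|]. left; now apply Rinv_0_lt_compat. Qed.

Let has_sum_tilted a :
  has_sum (fun k => poisson lam k * poisson lam (k + a) * rho ^ a) (heat t (Z.of_nat a) * rho ^ a).
Proof.
  apply (has_sum_ext (fun k => rho ^ a * (poisson lam k * poisson lam (k + a)))); [intros; ring|].
  rewrite Rmult_comm. apply has_sum_scal.
  pose proof (heat_has_sum t (Z.of_nat a) ht) as H. now rewrite Zabs2Nat.id in H.
Qed.

Lemma heat_tilted_le w M : (forall j, poisson (t / 2 * rho) j <= M) ->
  heat t w * rho ^ Z.abs_nat w <= exp (t / 2 * (rho + / rho - 2)) * M.
Proof.
  intros HM. fold lam tilt in HM |- *. set (a := Z.abs_nat w).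
  assert (Hw : heat t w = heat t (Z.of_nat a)).
  { unfold a. rewrite Zabs2Nat.id_abs. destruct (Z.abs_spec w) as [[_ ->]|[_ ->]];
      [easy | now rewrite heat_opp]. }
  rewrite Hw. pose proof (poisson_nonneg _ 0 hlam_up). pose proof (HM 0%nat).
  eapply Rle_trans; [apply Rle_abs|]. apply (has_sum_abs_le _ _ _ (has_sum_tilted a)).
  intros N. eapply Rle_trans with (sum_f_R0 (fun k => tilt * M * poisson (lam * / rho) k) N).
  - apply sum_Rle. intros k _. rewrite poisson_pair_tilt by lra.
    pose proof (poisson_nonneg (lam * / rho) k hlam_down).
    pose proof (poisson_nonneg (lam * rho) (k + a) hlam_up). pose proof (HM (k + a)%nat).
    pose proof (exp_pos (lam * (rho + / rho - 2))).
    rewrite Rabs_right by (apply Rle_ge, Rmult_le_pos; [apply Rmult_le_pos|]; lra).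
    unfold tilt.
    replace (exp (lam * (rho + / rho - 2)) * M * poisson (lam * / rho) k)
      with (exp (lam * (rho + / rho - 2)) * poisson (lam * / rho) k * M) by ring.
    apply Rmult_le_compat_l; [apply Rmult_le_pos|]; lra.
  - rewrite (sum_eq _ (fun k => poisson (lam * / rho) k * (tilt * M))) by (intros; ring).
    rewrite <- scal_sum. pose proof (poisson_window_sum_le1 (lam * / rho) 0 N hlam_down).
    assert (0 <= tilt * M) by (apply Rmult_le_pos; [left; apply exp_pos | lra]).
    rewrite <- (Rmult_1_r (tilt * M)) at 2. now apply Rmult_le_compat_l.
Qed.

Lemma heat_succ_tilted_le a M1 M2 : 1 <= rho ->
  (forall j, poisson (t / 2 * / rho) j <= M1) -> (forall j, poisson (t / 2 * rho) j <= M2) ->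
  Rabs (heat t (Z.of_nat (S a)) - heat t (Z.of_nat a)) * rho ^ a
  <= exp (t / 2 * (rho + / rho - 2)) * M1 * (2 * M2 + (1 - / rho)).
Proof.
  intros hr1 HM1 HM2. fold lam tilt in HM1, HM2 |- *.
  set (Qu := poisson (lam * rho)). set (Qd := poisson (lam * / rho)).
  assert (hir : 0 < / rho <= 1) by (split; [apply Rinv_0_lt_compat | rewrite <- Rinv_1;
    apply Rinv_le_contravar]; lra).
  assert (he : 0 < tilt) by apply exp_pos.
  assert (hM1 : 0 <= M1)
    by (pose proof (poisson_nonneg _ 0 hlam_down); pose proof (HM1 0%nat); lra).
  assert (Hd : has_sum (fun k => / rho * (poisson lam k * poisson lam (k + S a) * rho ^ S a)
      - poisson lam k * poisson lam (k + a) * rho ^ a)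
      ((heat t (Z.of_nat (S a)) - heat t (Z.of_nat a)) * rho ^ a)).
  { replace ((heat t (Z.of_nat (S a)) - heat t (Z.of_nat a)) * rho ^ a)
      with (/ rho * (heat t (Z.of_nat (S a)) * rho ^ S a) - heat t (Z.of_nat a) * rho ^ a)
      by (simpl; field; lra).
    apply has_sum_minus; [apply has_sum_scal|]; apply has_sum_tilted. }
  rewrite <- (Rabs_right (rho ^ a)) by (apply Rle_ge, pow_le; lra). rewrite <- Rabs_mult.
  apply (has_sum_abs_le _ _ _ Hd). intros N.
  apply Rle_trans with (sum_f_R0 (fun k => tilt * M1
    * (Rabs (Qu (S (a + k)) - Qu (a + k)%nat) + (1 - / rho) * Qu (S (a + k)))) N).
  - apply sum_Rle. intros k _. rewrite !poisson_pair_tilt by lra. fold Qu Qd tilt.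
    replace (k + S a)%nat with (S (a + k)) by lia. replace (k + a)%nat with (a + k)%nat by lia.
    apply damped_diff_le; [lra | now apply poisson_nonneg | apply HM1 | now apply poisson_nonneg
      | lra].
  - rewrite (sum_eq _ (fun k => (Rabs (Qu (S (a + k)) - Qu (a + k)%nat)
        + Qu (S a + k)%nat * (1 - / rho)) * (tilt * M1))) by (intros; simpl; ring).
    rewrite <- scal_sum, plus_sum, <- scal_sum.
    pose proof (poisson_variation_le _ M2 a N hlam_up HM2) as hvar.
    pose proof (poisson_window_sum_le1 _ (S a) N hlam_up) as hwin. fold Qu in hvar, hwin.
    assert (0 <= tilt * M1) by (apply Rmult_le_pos; lra).
    apply Rmult_le_compat_l; [lra|].
    assert ((1 - / rho) * sum_f_R0 (fun l => Qu (S a + l)%nat) N <= 1 - / rho)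
      by (rewrite <- (Rmult_1_r (1 - / rho)) at 2; apply Rmult_le_compat_l; lra).
    lra.
Qed.

End TiltedHeat.

(** * Bounds at the diffusive scale *)

(* [s] stands for [1 /\ t^(-1/2)], the inverse diffusive length at time [t]. *)
Definition diffusive_scale (t s : R) : Prop :=
  0 < s <= 1 /\ t * s ^ 2 <= 1 /\ (s = 1 \/ t * s ^ 2 = 1).

Lemma poisson_le_scale t s c mu j : 0 <= t -> diffusive_scale t s -> 0 < c -> c * t <= mu ->
  poisson mu j <= (1 + 8 / c) * s.
Proof.
  intros ht [hs [_ [-> | hts]]] hc hmu; assert (hc8 : 0 < 8 / c) by
    (apply Rmult_lt_0_compat; [lra | now apply Rinv_0_lt_compat]).
  - pose proof (poisson_le1 mu j ltac:(nra)). lra.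
  - assert (hmu0 : 0 <= mu) by nra.
    pose proof (poisson_sq_mul_le mu j hmu0) as Hloc. pose proof (poisson_nonneg mu j hmu0).
    assert (Hsq : poisson mu j ^ 2 * c <= 8 * s ^ 2).
    { replace (poisson mu j ^ 2 * c) with (poisson mu j ^ 2 * (c * t) * s ^ 2)
        by (rewrite <- (Rmult_1_r (poisson mu j ^ 2 * c)), <- hts; ring).
      apply Rmult_le_compat_r; [nra|]. eapply Rle_trans; [|exact Hloc].
      apply Rmult_le_compat_l; [nra | lra]. }
    assert (Hsq' : poisson mu j ^ 2 <= 8 / c * s ^ 2).
    { apply (Rmult_le_reg_r c); [lra|]. unfold Rdiv.
      replace (8 * / c * s ^ 2 * c) with (8 * s ^ 2) by (field; lra). exact Hsq. }
    assert (Hk : poisson mu j ^ 2 <= ((1 + 8 / c) * s) ^ 2).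
    { rewrite Rpow_mult_distr. eapply Rle_trans; [exact Hsq'|].
      apply Rmult_le_compat_r; nra. }
    assert (0 <= (1 + 8 / c) * s) by nra.
    nra.
Qed.

Lemma cosh_excess_le x : 0 <= x -> exp x + / exp x - 2 <= x ^ 2 * exp x.
Proof.
  intros hx. set (r := exp x).
  assert (hr : 1 + x <= r) by apply exp_ineq1_le.
  assert (hinv : 1 - x <= / r)
    by (unfold r; rewrite <- exp_Ropp; pose proof (exp_ineq1_le (- x)); lra).
  assert (hr1 : r * (1 - x) <= 1).
  { apply (Rmult_le_compat_l r) in hinv; [|lra]. rewrite Rinv_r in hinv; lra. }
  replace (r + / r - 2) with ((r - 1) ^ 2 / r) by (field; lra).
  apply (Rmult_le_reg_r r); [lra|]. unfold Rdiv. rewrite Rmult_assoc, Rinv_l by lra.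
  assert (0 <= r - 1 <= x * r) by lra. nra.
Qed.

Lemma tilt_exponent_le t s be : 0 <= t -> diffusive_scale t s -> 0 <= be ->
  exp (t / 2 * (exp (be * s) + / exp (be * s) - 2)) <= exp (be ^ 2 * exp be / 2).
Proof.
  intros ht [hs [hts _]] hb. apply exp_le_exp.
  assert (hbs : 0 <= be * s) by nra.
  pose proof (cosh_excess_le (be * s) hbs).
  assert (exp (be * s) <= exp be) by (apply exp_le_exp; nra).
  pose proof (exp_pos (be * s)).
  assert (t * (be * s) ^ 2 <= be ^ 2)
    by (replace (t * (be * s) ^ 2) with (be ^ 2 * (t * s ^ 2)) by ring; nra).
  apply Rle_trans with (t / 2 * ((be * s) ^ 2 * exp (be * s))); [apply Rmult_le_compat_l; lra|].
  assert (0 <= t * (be * s) ^ 2) by (apply Rmult_le_pos; [lra | apply pow2_ge_0]).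
  assert (t * (be * s) ^ 2 * exp (be * s) <= be ^ 2 * exp be).
  { apply Rle_trans with (be ^ 2 * exp (be * s)); [apply Rmult_le_compat_r; lra|].
    apply Rmult_le_compat_l; [apply pow2_ge_0 | lra]. }
  lra.
Qed.

Lemma le_mul_exp_opp x a B : x * exp a <= B -> x <= B * exp (- a).
Proof.
  intros H. pose proof (exp_pos a). rewrite exp_Ropp.
  apply (Rmult_le_reg_r (exp a)); [lra|].
  replace (B * / exp a * exp a) with B by (field; lra). exact H.
Qed.

Lemma heat_le_scale be : 0 <= be -> exists K, 0 < K /\
  forall t s w, 0 <= t -> diffusive_scale t s ->
  heat t w <= K * s * exp (- (be * s * Rabs (IZR w))).
Proof.
  intros hb. exists (17 * exp (be ^ 2 * exp be / 2)).
  split; [pose proof (exp_pos (be ^ 2 * exp be / 2)); lra|].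
  intros t s w ht hsc. pose proof hsc as [hs _].
  set (rho := exp (be * s)).
  assert (hr : 1 <= rho) by (unfold rho; pose proof (exp_ineq1_le (be * s)); nra).
  assert (HM : forall j, poisson (t / 2 * rho) j <= 17 * s).
  { intros j. replace 17 with (1 + 8 / (1 / 2)) by field.
    apply (poisson_le_scale t); auto; nra. }
  pose proof (heat_tilted_le t rho ht ltac:(lra) w _ HM) as Hc.
  pose proof (tilt_exponent_le t s be ht hsc hb) as He. fold rho in He.
  replace (rho ^ Z.abs_nat w) with (exp (be * s * Rabs (IZR w))) in Hc
    by (unfold rho; rewrite exp_pow, INR_IZR_INZ, Nat2Z.inj_abs_nat, abs_IZR; f_equal; ring).
  apply le_mul_exp_opp. eapply Rle_trans; [exact Hc|].
  replace (17 * exp (be ^ 2 * exp be / 2) * s) with (exp (be ^ 2 * exp be / 2) * (17 * s)) by ring.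
  apply Rmult_le_compat_r; lra.
Qed.

Lemma heat_succ_sub_le_scale be : 0 <= be -> exists K, 0 < K /\
  forall t s a, 0 <= t -> diffusive_scale t s ->
  Rabs (heat t (Z.of_nat (S a)) - heat t (Z.of_nat a)) <= K * s ^ 2 * exp (- (be * s * INR a)).
Proof.
  intros hb. set (c := exp (- be) / 2).
  assert (hc : 0 < c) by (unfold c; pose proof (exp_pos (- be)); lra).
  assert (hc8 : 0 < 8 / c) by (apply Rmult_lt_0_compat; [lra | now apply Rinv_0_lt_compat]).
  exists (exp (be ^ 2 * exp be / 2) * (1 + 8 / c) * (34 + be)).
  split; [pose proof (exp_pos (be ^ 2 * exp be / 2)); apply Rmult_lt_0_compat;
    [apply Rmult_lt_0_compat|]; lra|].
  intros t s a ht hsc. pose proof hsc as [hs _].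
  set (rho := exp (be * s)).
  assert (hr : 1 <= rho) by (unfold rho; pose proof (exp_ineq1_le (be * s)); nra).
  assert (hir : exp (- be) <= / rho) by (unfold rho; rewrite <- exp_Ropp; apply exp_le_exp; nra).
  assert (hir1 : 1 - be * s <= / rho)
    by (unfold rho; rewrite <- exp_Ropp; pose proof (exp_ineq1_le (- (be * s))); lra).
  assert (hir2 : / rho <= 1) by (rewrite <- Rinv_1; apply Rinv_le_contravar; lra).
  assert (HMu : forall j, poisson (t / 2 * rho) j <= 17 * s).
  { intros j. replace 17 with (1 + 8 / (1 / 2)) by field.
    apply (poisson_le_scale t); auto; nra. }
  assert (HMd : forall j, poisson (t / 2 * / rho) j <= (1 + 8 / c) * s).
  { intros j. apply (poisson_le_scale t); auto. unfold c. nra. }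
  pose proof (heat_succ_tilted_le t rho ht ltac:(lra) a _ _ hr HMd HMu) as Hc.
  pose proof (tilt_exponent_le t s be ht hsc hb) as He. fold rho in He.
  replace (rho ^ a) with (exp (be * s * INR a)) in Hc
    by (unfold rho; rewrite exp_pow; f_equal; ring).
  apply le_mul_exp_opp. eapply Rle_trans; [exact Hc|].
  assert (0 <= 2 * (17 * s) + (1 - / rho) <= (34 + be) * s) by lra.
  assert (0 <= (1 + 8 / c) * s) by nra.
  replace (exp (be ^ 2 * exp be / 2) * (1 + 8 / c) * (34 + be) * s ^ 2)
    with (exp (be ^ 2 * exp be / 2) * ((1 + 8 / c) * s) * ((34 + be) * s)) by ring.
  apply Rmult_le_compat; [| |apply Rmult_le_compat_r|]; try lra.
  apply Rmult_le_pos; [left; apply exp_pos | lra].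
Qed.

Lemma heat_grad_le_scale be : 0 <= be -> exists K, 0 < K /\
  forall t s w, 0 <= t -> diffusive_scale t s ->
  Rabs (heat t (w + 1) - heat t w) <= K * s ^ 2 * exp (- (be * s * Rabs (IZR w))).
Proof.
  intros hb. destruct (heat_succ_sub_le_scale be hb) as [K [hK HK]].
  exists (K * exp be). split; [pose proof (exp_pos be); nra|].
  intros t s w ht hsc. pose proof hsc as [hs _].
  assert (hKs : 0 <= K * s ^ 2) by (apply Rmult_le_pos; [lra | apply pow2_ge_0]).
  destruct (Z_le_gt_dec 0 w) as [hw|hw].
  - set (a := Z.to_nat w). replace w with (Z.of_nat a) by (unfold a; lia).
    replace (Z.of_nat a + 1)%Z with (Z.of_nat (S a)) by lia.
    eapply Rle_trans; [now apply (HK t s)|].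
    rewrite <- INR_IZR_INZ, Rabs_right by (apply Rle_ge, pos_INR).
    pose proof (exp_pos (- (be * s * INR a))).
    assert (1 <= exp be) by (pose proof (exp_ineq1_le be); lra).
    replace (K * exp be * s ^ 2 * exp (- (be * s * INR a)))
      with (K * s ^ 2 * exp (- (be * s * INR a)) * exp be) by ring.
    rewrite <- (Rmult_1_r (K * s ^ 2 * exp (- (be * s * INR a)))) at 1.
    apply Rmult_le_compat_l; [apply Rmult_le_pos|]; lra.
  - set (a := Z.to_nat (- w - 1)).
    replace w with (- Z.of_nat (S a))%Z by (unfold a; rewrite Nat2Z.inj_succ, Z2Nat.id; lia).
    replace (- Z.of_nat (S a) + 1)%Z with (- Z.of_nat a)%Z by lia.
    rewrite !heat_opp, Rabs_minus_sym. eapply Rle_trans; [now apply (HK t s)|].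
    replace (Rabs (IZR (- Z.of_nat (S a)))) with (INR a + 1)
      by (rewrite <- abs_IZR, Z.abs_opp, Z.abs_eq, <- INR_IZR_INZ, S_INR by lia; reflexivity).
    replace (- (be * s * (INR a + 1))) with (- (be * s * INR a) + (be - be * s) + - be) by ring.
    rewrite !exp_plus.
    assert (1 <= exp (be - be * s)) by (pose proof (exp_ineq1_le (be - be * s)); nra).
    pose proof (exp_pos (- (be * s * INR a))). pose proof (exp_pos be).
    replace (K * exp be * s ^ 2 * (exp (- (be * s * INR a)) * exp (be - be * s) * exp (- be)))
      with (K * s ^ 2 * exp (- (be * s * INR a)) * exp (be - be * s) * (exp be * exp (- be)))
      by ring.
    rewrite <- exp_plus, Rplus_opp_r, exp_0, Rmult_1_r.
    assert (0 <= K * s ^ 2 * exp (- (be * s * INR a))) by (apply Rmult_le_pos; lra).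
    nra.
Qed.

(** * The Robin kernel *)

Lemma muA_bounds A eps : Rabs A * eps <= 1 / 2 -> 0 < eps -> 1 / 2 <= muA A eps <= 3 / 2.
Proof.
  intros h he. unfold muA. pose proof (Rle_abs A). pose proof (Rle_abs (- A)).
  rewrite Rabs_Ropp in *. nra.
Qed.

Lemma robin_coeff_le A eps : Rabs A * eps <= 1 / 2 -> 0 < eps ->
  Rabs (1 - / muA A eps ^ 2) <= 10 * Rabs A * eps.
Proof.
  intros h he. pose proof (muA_bounds A eps h he) as hmu. set (mu := muA A eps) in *.
  assert (hm1 : Rabs (mu - 1) = Rabs A * eps).
  { unfold mu, muA. replace (1 - A * eps - 1) with (- (A * eps)) by ring.
    rewrite Rabs_Ropp, Rabs_mult, (Rabs_right eps); lra. }
  replace (1 - / mu ^ 2) with ((mu - 1) * ((mu + 1) / mu ^ 2)) by (field; lra).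
  rewrite Rabs_mult, hm1, (Rabs_right ((mu + 1) / mu ^ 2))
    by (apply Rle_ge, Rmult_le_pos; [lra|]; left; apply Rinv_0_lt_compat; nra).
  assert ((mu + 1) / mu ^ 2 <= 10).
  { apply (Rmult_le_reg_r (mu ^ 2)); [nra|].
    replace ((mu + 1) / mu ^ 2 * mu ^ 2) with (mu + 1) by (field; lra). nra. }
  assert (0 <= Rabs A * eps) by (apply Rmult_le_pos; [apply Rabs_pos | lra]).
  replace (10 * Rabs A * eps) with (Rabs A * eps * 10) by ring.
  apply Rmult_le_compat_l; lra.
Qed.

Lemma exp_opp_le_half x : 0 <= x <= 1 -> exp (- x) <= 1 - x / 2.
Proof.
  intros hx. rewrite exp_Ropp. pose proof (exp_ineq1_le x). pose proof (exp_pos x).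
  apply (Rmult_le_reg_r (exp x)); [lra|]. rewrite Rinv_l by lra. nra.
Qed.

(* With [c = T + 1], the condition [eps <= c * s] is how [t <= T / eps^2] enters. *)
Definition robin_regime (A c eps t s : R) : Prop :=
  0 < eps <= 1 /\ Rabs A * eps <= 1 / 2 /\ 0 <= t /\ diffusive_scale t s /\ eps <= c * s.

Section RobinTail.

Variables (A c b eps t s K : R) (h : Z -> R) (z y : Z).
Hypothesis (H : robin_regime A c eps t s) (hb : 0 <= b) (hK : 0 <= K)
  (Hh : forall w, Rabs (h w) <= K * exp (- ((b + (Rabs A + 1) * c) * s * Rabs (IZR w))))
  (hz : (0 <= z)%Z) (hy : (0 <= y)%Z).

Lemma robin_ratio_le : exp (- ((Rabs A + 1) * c * s)) * muA A eps <= 1 - eps / 2.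
Proof.
  destruct H as [heps [hAe [_ [[hs _] hes]]]].
  pose proof (muA_bounds A eps hAe ltac:(lra)).
  eapply Rle_trans; [|apply exp_opp_le_half; lra].
  assert (muA A eps <= exp (- (A * eps)))
    by (unfold muA; pose proof (exp_ineq1_le (- (A * eps))); lra).
  apply Rle_trans with (exp (- ((Rabs A + 1) * c * s)) * exp (- (A * eps))).
  - apply Rmult_le_compat_l; [left; apply exp_pos | lra].
  - rewrite <- exp_plus. apply exp_le_exp. pose proof (Rle_abs (- A)). rewrite Rabs_Ropp in *.
    assert ((Rabs A + 1) * eps <= (Rabs A + 1) * (c * s))
      by (apply Rmult_le_compat_l; pose proof (Rabs_pos A); lra).
    assert (- A * eps <= Rabs A * eps) by (apply Rmult_le_compat_r; lra).
    lra.
Qed.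

Lemma robin_tail_term_le k :
  Rabs (h (z + y + Z.of_nat (k + 2))%Z * muA A eps ^ (k + 2))
  <= K * exp (- (b * s * Rabs (IZR z - IZR y))) * (exp (- ((Rabs A + 1) * c * s)) * muA A eps) ^ k.
Proof.
  destruct H as [heps [hAe [_ [[hs _] hes]]]].
  pose proof (muA_bounds A eps hAe ltac:(lra)) as hmu. pose proof robin_ratio_le as hr.
  set (mu := muA A eps) in *. set (be := (Rabs A + 1) * c) in *.
  assert (hbe : 0 <= be * s) by (pose proof (Rabs_pos A); unfold be; nra).
  assert (hr0 : 0 <= exp (- (be * s)) * mu) by (pose proof (exp_pos (- (be * s))); nra).
  apply IZR_le in hz, hy. pose proof (pos_INR k).
  set (w := (z + y + Z.of_nat (k + 2))%Z).
  assert (hw : Rabs (IZR w) = IZR z + IZR y + INR k + 2).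
  { unfold w. rewrite !plus_IZR, <- INR_IZR_INZ, plus_INR. simpl (INR 2).
    rewrite Rabs_right; lra. }
  set (E := exp (- (b * s * Rabs (IZR z - IZR y)))).
  assert (Hdecay : exp (- ((b + be) * s * Rabs (IZR w))) <= E * exp (- (be * s)) ^ (k + 2)).
  { unfold E. rewrite exp_pow, <- exp_plus, hw, plus_INR. simpl (INR 2). apply exp_le_exp.
    assert (Rabs (IZR z - IZR y) <= IZR z + IZR y + INR k + 2) by (apply Rabs_le; lra).
    assert (b * s * Rabs (IZR z - IZR y) <= b * s * (IZR z + IZR y + INR k + 2))
      by (apply Rmult_le_compat_l; nra).
    nra. }
  assert (Hgeo : exp (- (be * s)) ^ (k + 2) * mu ^ (k + 2) <= (exp (- (be * s)) * mu) ^ k).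
  { rewrite <- Rpow_mult_distr, pow_add. pose proof (pow_le _ k hr0).
    rewrite <- (Rmult_1_r ((exp (- (be * s)) * mu) ^ k)) at 2.
    apply Rmult_le_compat_l; [lra|]. simpl. nra. }
  rewrite Rabs_mult, (Rabs_right (mu ^ (k + 2))) by (apply Rle_ge, pow_le; lra).
  pose proof (pow_le mu (k + 2) ltac:(lra)). assert (hE : 0 < E) by apply exp_pos.
  apply Rle_trans with (K * exp (- ((b + be) * s * Rabs (IZR w))) * mu ^ (k + 2));
    [now apply Rmult_le_compat_r, Hh|].
  apply Rle_trans with (K * E * (exp (- (be * s)) ^ (k + 2) * mu ^ (k + 2))).
  - replace (K * E * (exp (- (be * s)) ^ (k + 2) * mu ^ (k + 2)))
      with (K * (E * exp (- (be * s)) ^ (k + 2)) * mu ^ (k + 2)) by ring.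
    apply Rmult_le_compat_r; [lra|]. now apply Rmult_le_compat_l.
  - apply Rmult_le_compat_l; [apply Rmult_le_pos|]; lra.
Qed.

(* The extra decay rate [(|A| + 1) c] beats the growth of [mu_A ^ k]: the tail is dominated
   by a geometric series of ratio [<= 1 - eps / 2], hence is [O(1 / eps)], which the
   prefactor [1 - mu_A^-2 = O(eps)] compensates. *)
Lemma robin_tail_le :
  exists l, has_sum (fun k => h (z + y + Z.of_nat (k + 2))%Z * muA A eps ^ (k + 2)) l /\
    Rabs (1 - / muA A eps ^ 2) * Rabs l <= 20 * Rabs A * K * exp (- (b * s * Rabs (IZR z - IZR y))).
Proof.
  pose proof H as [heps [hAe _]]. pose proof (muA_bounds A eps hAe ltac:(lra)) as hmu.
  pose proof robin_ratio_le as hr.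
  set (r := exp (- ((Rabs A + 1) * c * s)) * muA A eps) in *.
  assert (hr0 : 0 <= r) by (unfold r; pose proof (exp_pos (- ((Rabs A + 1) * c * s))); nra).
  set (E := exp (- (b * s * Rabs (IZR z - IZR y)))).
  assert (hE : 0 < E) by apply exp_pos.
  destruct (has_sum_of_abs_le _ _ _ robin_tail_term_le (geometric_has_sum (K * E) r ltac:(lra)))
    as [l [Hl Hlb]].
  exists l. split; [exact Hl|].
  pose proof (robin_coeff_le A eps hAe ltac:(lra)) as hcoef. pose proof (Rabs_pos l).
  assert (Hl2 : eps * Rabs l <= 2 * (K * E)).
  { assert (Rabs l * (1 - r) <= K * E); [|nra].
    apply (Rmult_le_compat_r (1 - r)) in Hlb; [|lra]. unfold Rdiv in Hlb.
    rewrite Rmult_assoc, Rinv_l in Hlb by lra. lra. }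
  apply Rle_trans with (10 * Rabs A * (eps * Rabs l)).
  - replace (10 * Rabs A * (eps * Rabs l)) with (10 * Rabs A * eps * Rabs l) by ring.
    now apply Rmult_le_compat_r.
  - replace (20 * Rabs A * K * E) with (10 * Rabs A * (2 * (K * E))) by ring.
    apply Rmult_le_compat_l; [pose proof (Rabs_pos A); lra | exact Hl2].
Qed.

End RobinTail.

Definition robin_transform (A eps : R) (h : Z -> R) (z y : Z) : R :=
  h (z - y)%Z + muA A eps * h (z + y + 1)%Z
  + (1 - / muA A eps ^ 2) * series (fun k => h (z + y + Z.of_nat (k + 2))%Z * muA A eps ^ (k + 2)).

Lemma robin_eq_transform A eps t z y : robin A eps t z y = robin_transform A eps (heat t) z y.
Proof. reflexivity. Qed.

Lemma robin_transform_succ_sub A eps (h : Z -> R) z y l1 l0 :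
  has_sum (fun k => h (z + 1 + y + Z.of_nat (k + 2))%Z * muA A eps ^ (k + 2)) l1 ->
  has_sum (fun k => h (z + y + Z.of_nat (k + 2))%Z * muA A eps ^ (k + 2)) l0 ->
  robin_transform A eps h (z + 1) y - robin_transform A eps h z y
  = robin_transform A eps (fun w => h (w + 1)%Z - h w) z y.
Proof.
  intros H1 H0. unfold robin_transform.
  rewrite (series_of_has_sum _ _ H1), (series_of_has_sum _ _ H0), (series_of_has_sum _ (l1 - l0)).
  - replace (z + 1 - y)%Z with (z - y + 1)%Z by ring.
    replace (z + 1 + y + 1)%Z with (z + y + 1 + 1)%Z by ring. ring.
  - eapply has_sum_ext; [|exact (has_sum_minus _ _ _ _ H1 H0)].
    intros k. cbv beta. replace (z + 1 + y + Z.of_nat (k + 2))%Z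
      with (z + y + Z.of_nat (k + 2) + 1)%Z by ring. ring.
Qed.

Lemma Rabs_triang3 a b c : Rabs (a + b + c) <= Rabs a + Rabs b + Rabs c.
Proof. pose proof (Rabs_triang (a + b) c). pose proof (Rabs_triang a b). lra. Qed.

(* Every argument [w] at which [h] is sampled has [|z - y| <= |w|], so decay of [h] at rate
   [b + (|A| + 1) c] gives the envelope in [|z - y|]; the surplus rate pays for the tail. *)
Lemma robin_transform_le A c b eps t s (h : Z -> R) K z y :
  robin_regime A c eps t s -> 0 <= b -> 0 <= K ->
  (forall w, Rabs (h w) <= K * exp (- ((b + (Rabs A + 1) * c) * s * Rabs (IZR w)))) ->
  (0 <= z)%Z -> (0 <= y)%Z ->
  Rabs (robin_transform A eps h z y)
  <= (3 + 20 * Rabs A) * K * exp (- (b * s * Rabs (IZR z - IZR y))).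
Proof.
  intros H hb hK Hh hz hy. pose proof H as [heps [hAe [_ [[hs _] hes]]]].
  pose proof (muA_bounds A eps hAe ltac:(lra)) as hmu. pose proof (Rabs_pos A) as hA.
  assert (hc : 0 <= c) by (apply (Rmult_le_reg_r s); nra).
  destruct (robin_tail_le A c b eps t s K h z y H hb hK Hh hz hy) as [l [Hl Hlb]].
  unfold robin_transform. rewrite (series_of_has_sum _ l Hl).
  set (E := exp (- (b * s * Rabs (IZR z - IZR y)))) in *. set (mu := muA A eps) in *.
  assert (Hdecay : forall w, Rabs (IZR z - IZR y) <= Rabs (IZR w) -> Rabs (h w) <= K * E).
  { intros w hw. eapply Rle_trans; [apply Hh|]. apply Rmult_le_compat_l; [lra|].
    apply exp_le_exp. assert (0 <= b * s) by nra. assert (0 <= (Rabs A + 1) * c * s) by nra.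
    assert (b * s * Rabs (IZR z - IZR y) <= b * s * Rabs (IZR w)) by (apply Rmult_le_compat_l; lra).
    pose proof (Rabs_pos (IZR w)). nra. }
  assert (h1 : Rabs (h (z - y)%Z) <= K * E) by (apply Hdecay; rewrite minus_IZR; lra).
  assert (h2 : Rabs (mu * h (z + y + 1)%Z) <= 3 / 2 * (K * E)).
  { rewrite Rabs_mult, (Rabs_right mu) by lra. apply Rmult_le_compat; try lra; [apply Rabs_pos|].
    apply Hdecay. apply IZR_le in hz, hy.
    rewrite !plus_IZR, (Rabs_right (IZR z + IZR y + 1)) by lra.
    apply Rabs_le. lra. }
  pose proof (Rabs_triang3 (h (z - y)%Z) (mu * h (z + y + 1)%Z) ((1 - / mu ^ 2) * l)) as Htri.
  rewrite (Rabs_mult (1 - / mu ^ 2)) in Htri.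
  assert (0 <= K * E) by (unfold E; pose proof (exp_pos (- (b * s * Rabs (IZR z - IZR y)))); nra).
  replace ((3 + 20 * Rabs A) * K * E) with (K * E + 2 * (K * E) + 20 * Rabs A * K * E) by ring.
  lra.
Qed.

Section RobinBounds.

Variables (A c b : R).
Hypothesis (hc : 0 <= c) (hb : 0 <= b).

Let hbe : 0 <= b + (Rabs A + 1) * c.
Proof. pose proof (Rabs_pos A). nra. Qed.

Lemma robin_le_scale : exists K, 0 <= K /\ forall eps t s z y,
  robin_regime A c eps t s -> (0 <= z)%Z -> (0 <= y)%Z ->
  Rabs (robin A eps t z y) <= K * s * exp (- (b * s * Rabs (IZR z - IZR y))).
Proof.
  destruct (heat_le_scale _ hbe) as [K [hK HK]].
  exists ((3 + 20 * Rabs A) * K). split; [pose proof (Rabs_pos A); nra|].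
  intros eps t s z y H hz hy. pose proof H as [_ [_ [ht [hsc _]]]]. pose proof hsc as [[hs _] _].
  rewrite robin_eq_transform.
  replace ((3 + 20 * Rabs A) * K * s) with ((3 + 20 * Rabs A) * (K * s)) by ring.
  apply (robin_transform_le A c b eps t s); [exact H | exact hb | nra | | exact hz | exact hy].
  intros w. rewrite Rabs_right by (apply Rle_ge, heat_nonneg; auto). now apply HK.
Qed.

Lemma robin_grad_le_scale : exists K, 0 <= K /\ forall eps t s z y,
  robin_regime A c eps t s -> (0 <= z)%Z -> (0 <= y)%Z ->
  Rabs (robin A eps t (z + 1) y - robin A eps t z y)
  <= K * s ^ 2 * exp (- (b * s * Rabs (IZR z - IZR y))).
Proof.
  destruct (heat_le_scale _ hbe) as [K0 [hK0 HK0]].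
  destruct (heat_grad_le_scale _ hbe) as [K [hK HK]].
  exists ((3 + 20 * Rabs A) * K). split; [pose proof (Rabs_pos A); nra|].
  intros eps t s z y H hz hy. pose proof H as [_ [_ [ht [hsc _]]]]. pose proof hsc as [[hs _] _].
  assert (Hh : forall w, Rabs (heat t w)
      <= K0 * s * exp (- ((b + (Rabs A + 1) * c) * s * Rabs (IZR w)))).
  { intros w. rewrite Rabs_right by (apply Rle_ge, heat_nonneg; auto). now apply HK0. }
  destruct (robin_tail_le A c b eps t s (K0 * s) (heat t) (z + 1) y H hb ltac:(nra) Hh
    ltac:(lia) hy) as [l1 [Hl1 _]].
  destruct (robin_tail_le A c b eps t s (K0 * s) (heat t) z y H hb ltac:(nra) Hh hz hy)
    as [l0 [Hl0 _]].
  rewrite !robin_eq_transform, (robin_transform_succ_sub _ _ _ _ _ _ _ Hl1 Hl0).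
  replace ((3 + 20 * Rabs A) * K * s ^ 2) with ((3 + 20 * Rabs A) * (K * s ^ 2)) by ring.
  apply (robin_transform_le A c b eps t s); [exact H | exact hb | pose proof (pow2_ge_0 s); nra
    | | exact hz | exact hy].
  intros w. now apply HK.
Qed.

End RobinBounds.

(** * Increments *)

Lemma min1_negpow_half_scale t : 0 <= t -> diffusive_scale t (min1_negpow t (1 / 2)).
Proof.
  intros ht. unfold min1_negpow, diffusive_scale. destruct (Rlt_dec 0 t) as [h|h].
  - unfold Rpower. set (L := ln t).
    assert (Et : t = exp L) by (unfold L; now rewrite exp_ln).
    destruct (Rle_lt_dec L 0) as [hL|hL].
    + assert (1 <= exp (- (1 / 2) * L)) by (pose proof (exp_ineq1_le (- (1 / 2) * L)); lra).
      rewrite Rmin_left by lra.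
      assert (t <= 1) by (rewrite Et, <- exp_0; now apply exp_le_exp).
      split; [lra | split; [rewrite pow1; lra | now left]].
    + assert (exp (- (1 / 2) * L) < 1) by (apply exp_lt_1; lra).
      rewrite Rmin_right by lra. pose proof (exp_pos (- (1 / 2) * L)).
      assert (t * exp (- (1 / 2) * L) ^ 2 = 1).
      { rewrite Et, exp_pow, <- exp_plus.
        replace (L + INR 2 * (- (1 / 2) * L)) with 0 by (simpl; field). apply exp_0. }
      split; [lra | split; [lra | now right]].
  - split; [lra | split; [rewrite pow1; lra | now left]].
Qed.

Lemma robin_regime_of_small_eps A T eps t :
  0 < T -> 0 < eps < / (2 * (Rabs A + 1)) -> 0 <= t <= T / eps ^ 2 ->
  robin_regime A (T + 1) eps t (min1_negpow t (1 / 2)).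
Proof.
  intros hT [he he0] [ht htT]. pose proof (Rabs_pos A) as hA.
  assert (hsmall : eps * (2 * (Rabs A + 1)) < 1).
  { apply (Rmult_lt_compat_r (2 * (Rabs A + 1))) in he0; [|lra].
    now rewrite Rinv_l in he0 by lra. }
  assert (heps : eps <= 1 / 2) by nra.
  pose proof (min1_negpow_half_scale t ht) as hsc.
  set (s := min1_negpow t (1 / 2)) in *.
  split; [nra|]. split; [nra|]. split; [lra|]. split; [exact hsc|].
  destruct hsc as [hs [_ [-> | hts]]]; [lra|].
  assert (t * eps ^ 2 <= T).
  { apply (Rmult_le_compat_r (eps ^ 2)) in htT; [|nra].
    unfold Rdiv in htT. rewrite Rmult_assoc, Rinv_l in htT by nra. lra. }
  assert (eps ^ 2 <= ((T + 1) * s) ^ 2).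
  { replace (eps ^ 2) with (t * eps ^ 2 * s ^ 2)
      by (rewrite <- (Rmult_1_r (eps ^ 2)) at 2; rewrite <- hts; ring).
    rewrite Rpow_mult_distr. apply Rmult_le_compat_r; [nra|]. nra. }
  assert (0 <= (T + 1) * s) by nra.
  nra.
Qed.

Lemma scale_mul_shift_le t s n : 0 <= t -> diffusive_scale t s ->
  (Z.abs n <= Zceil (sqrt t))%Z -> s * IZR (Z.abs n) <= 2.
Proof.
  intros ht [hs [hts _]] hn. apply IZR_le in hn.
  pose proof (Zceil_bound (sqrt t)) as [hc _].
  pose proof (sqrt_pos t). pose proof (sqrt_sqrt t ht).
  assert (s * sqrt t <= 1).
  { assert ((s * sqrt t) ^ 2 <= 1) by (replace ((s * sqrt t) ^ 2) with (t * s ^ 2); nra).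
    nra. }
  nra.
Qed.

(* [1 /\ x <= x ^ v] for [x = N s] and [v] in [[0, 1]]. *)
Lemma scale_min_le_interpolation t v N : 0 <= t -> 0 <= v <= 1 -> N = 0 \/ 1 <= N ->
  min1_negpow t (1 / 2) * Rmin 1 (N * min1_negpow t (1 / 2))
  <= min1_negpow t ((1 + v) / 2) * rpow N v.
Proof.
  intros ht hv hN.
  assert (hm : 0 <= min1_negpow t ((1 + v) / 2)).
  { unfold min1_negpow. destruct (Rlt_dec 0 t); [|lra].
    apply Rmin_glb; [lra | left; apply exp_pos]. }
  destruct hN as [-> | hN].
  - rewrite Rmult_0_l, Rmin_right by lra. rewrite Rmult_0_r.
    apply Rmult_le_pos; [exact hm|]. unfold rpow.
    destruct (Rlt_dec 0 0); [lra|]. destruct (Req_EM_T v 0); lra.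
  - unfold rpow. destruct (Rlt_dec 0 N) as [_|]; [|lra]. unfold Rpower.
    assert (hlnN : 0 <= ln N).
    { destruct (Req_dec N 1) as [->|]; [rewrite ln_1; lra|].
      left. rewrite <- ln_1. apply ln_increasing; lra. }
    unfold min1_negpow. destruct (Rlt_dec 0 t) as [h|h].
    + unfold Rpower. set (L := ln t).
      destruct (Rle_lt_dec L 0) as [hL|hL].
      * assert (1 <= exp (- (1 / 2) * L)) by (pose proof (exp_ineq1_le (- (1 / 2) * L)); lra).
        assert (1 <= exp (- ((1 + v) / 2) * L))
          by (pose proof (exp_ineq1_le (- ((1 + v) / 2) * L)); nra).
        assert (1 <= exp (v * ln N)) by (pose proof (exp_ineq1_le (v * ln N)); nra).
        rewrite !Rmin_left by lra. pose proof (Rmin_l 1 (N * 1)). lra.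
      * assert (exp (- (1 / 2) * L) < 1) by (apply exp_lt_1; lra).
        assert (exp (- ((1 + v) / 2) * L) < 1) by (apply exp_lt_1; nra).
        rewrite !(Rmin_right 1 (exp _)) by lra.
        set (u := ln N - 1 / 2 * L).
        assert (EN : N * exp (- (1 / 2) * L) = exp u)
          by (unfold u; rewrite <- (exp_ln N) at 1 by lra; rewrite <- exp_plus; f_equal; field).
        rewrite EN.
        replace (exp (- ((1 + v) / 2) * L) * exp (v * ln N))
          with (exp (- (1 / 2) * L) * exp (v * u))
          by (rewrite <- !exp_plus; f_equal; unfold u; field).
        apply Rmult_le_compat_l; [left; apply exp_pos|].
        destruct (Rle_dec 0 u).
        -- eapply Rle_trans; [apply Rmin_l|]. pose proof (exp_ineq1_le (v * u)). nra.
        -- eapply Rle_trans; [apply Rmin_r|]. apply exp_le_exp. nra.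
    + assert (1 <= exp (v * ln N)) by (pose proof (exp_ineq1_le (v * ln N)); nra).
      pose proof (Rmin_l 1 (N * 1)). lra.
Qed.

Lemma telescope_le (f : Z -> R) lo m B :
  (forall j : nat, (j < m)%nat -> Rabs (f (lo + Z.of_nat j + 1)%Z - f (lo + Z.of_nat j)%Z) <= B) ->
  Rabs (f (lo + Z.of_nat m)%Z - f lo) <= INR m * B.
Proof.
  induction m as [|m IH]; intros H.
  - rewrite Z.add_0_r, Rminus_diag, Rabs_R0. simpl. lra.
  - rewrite S_INR.
    replace (f (lo + Z.of_nat (S m))%Z - f lo)
      with ((f (lo + Z.of_nat m + 1)%Z - f (lo + Z.of_nat m)%Z) + (f (lo + Z.of_nat m)%Z - f lo))
      by (replace (lo + Z.of_nat (S m))%Z with (lo + Z.of_nat m + 1)%Z by lia; ring).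
    eapply Rle_trans; [apply Rabs_triang|].
    pose proof (H m (Nat.lt_succ_diag_r m)).
    pose proof (IH (fun j hj => H j (Nat.lt_lt_succ_r _ _ hj))). lra.
Qed.

Lemma telescope_Z_le (f : Z -> R) x n B :
  (forall z, (Z.min x (x + n) <= z < Z.max x (x + n))%Z -> Rabs (f (z + 1)%Z - f z) <= B) ->
  Rabs (f (x + n)%Z - f x) <= IZR (Z.abs n) * B.
Proof.
  intros H. rewrite <- (Nat2Z.inj_abs_nat n), <- INR_IZR_INZ.
  destruct (Z_le_gt_dec 0 n) as [hn|hn].
  - replace (x + n)%Z with (x + Z.of_nat (Z.abs_nat n))%Z at 1 by lia.
    apply telescope_le. intros j hj. apply H. lia.
  - rewrite Rabs_minus_sym.
    replace x with (x + n + Z.of_nat (Z.abs_nat n))%Z at 1 by lia.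
    apply telescope_le. intros j hj. apply H. lia.
Qed.

Section Increments.

Variables (f : Z -> R) (b s : R) (x y n : Z).
Hypothesis (hb : 0 <= b) (hs : 0 <= s) (hx : (0 <= x)%Z) (hxn : (0 <= x + n)%Z)
  (hbn : b * s * IZR (Z.abs n) <= 2 * b).

Let envelope_shift z : Rabs (IZR z - IZR x) <= IZR (Z.abs n) ->
  exp (- (b * s * Rabs (IZR z - IZR y))) <= exp (- (b * s * Rabs (IZR x - IZR y))) * exp (2 * b).
Proof.
  intros hz. rewrite <- exp_plus. apply exp_le_exp.
  assert (Rabs (IZR x - IZR y) <= Rabs (IZR z - IZR y) + Rabs (IZR z - IZR x)).
  { replace (IZR x - IZR y) with ((IZR z - IZR y) + - (IZR z - IZR x)) by ring.
    rewrite <- (Rabs_Ropp (IZR z - IZR x)). apply Rabs_triang. }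
  assert (0 <= b * s) by nra.
  assert (b * s * Rabs (IZR z - IZR x) <= b * s * IZR (Z.abs n)) by (apply Rmult_le_compat_l; lra).
  assert (b * s * Rabs (IZR x - IZR y)
    <= b * s * Rabs (IZR z - IZR y) + b * s * Rabs (IZR z - IZR x)) by nra.
  lra.
Qed.

Lemma increment_le_of_envelope S : 0 <= S ->
  (forall z, (0 <= z)%Z -> Rabs (f z) <= S * exp (- (b * s * Rabs (IZR z - IZR y)))) ->
  Rabs (f (x + n)%Z - f x) <= S * (exp (2 * b) + 1) * exp (- (b * s * Rabs (IZR x - IZR y))).
Proof.
  intros hS Hf. unfold Rminus at 1. eapply Rle_trans; [apply Rabs_triang|]. rewrite Rabs_Ropp.
  pose proof (Hf x hx). pose proof (Hf (x + n)%Z hxn).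
  assert (exp (- (b * s * Rabs (IZR (x + n) - IZR y)))
      <= exp (- (b * s * Rabs (IZR x - IZR y))) * exp (2 * b)).
  { apply envelope_shift. rewrite plus_IZR, abs_IZR.
    replace (IZR x + IZR n - IZR x) with (IZR n) by ring. lra. }
  assert (S * exp (- (b * s * Rabs (IZR (x + n) - IZR y)))
      <= S * (exp (- (b * s * Rabs (IZR x - IZR y))) * exp (2 * b))) by now apply Rmult_le_compat_l.
  lra.
Qed.

Lemma increment_le_of_grad_envelope G : 0 <= G ->
  (forall z, (0 <= z)%Z ->
    Rabs (f (z + 1)%Z - f z) <= G * exp (- (b * s * Rabs (IZR z - IZR y)))) ->
  Rabs (f (x + n)%Z - f x)
  <= IZR (Z.abs n) * (G * exp (2 * b)) * exp (- (b * s * Rabs (IZR x - IZR y))).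
Proof.
  intros hG Hf. rewrite Rmult_assoc. apply telescope_Z_le. intros z hz.
  eapply Rle_trans; [apply Hf; lia|].
  replace (G * exp (2 * b) * exp (- (b * s * Rabs (IZR x - IZR y))))
    with (G * (exp (- (b * s * Rabs (IZR x - IZR y))) * exp (2 * b))) by ring.
  apply Rmult_le_compat_l; [exact hG|]. apply envelope_shift.
  rewrite Z_R_minus, <- abs_IZR. apply IZR_le. lia.
Qed.

End Increments.

Section RobinIncrement.

Variables (A c b : R).
Hypothesis (hc : 0 <= c) (hb : 0 <= b).

Lemma robin_increment_le : exists M, 0 <= M /\ forall eps t s x y n,
  robin_regime A c eps t s -> (0 <= x)%Z -> (0 <= y)%Z -> (0 <= x + n)%Z ->
  b * s * IZR (Z.abs n) <= 2 * b ->
  Rabs (robin A eps t (x + n) y - robin A eps t x y)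
  <= M * exp (- (b * s * Rabs (IZR x - IZR y))) * (s * Rmin 1 (IZR (Z.abs n) * s)).
Proof.
  destruct (robin_le_scale A c b hc hb) as [K0 [hK0 HK0]].
  destruct (robin_grad_le_scale A c b hc hb) as [K1 [hK1 HK1]].
  pose proof (exp_pos (2 * b)) as he2b.
  exists (K0 * (exp (2 * b) + 1) + K1 * exp (2 * b)). split; [nra|].
  intros eps t s x y n H hx hy hxn hbn. pose proof H as [_ [_ [_ [[[hs _] _] _]]]].
  set (f := fun z => robin A eps t z y).
  pose proof (increment_le_of_envelope f b s x y n hb ltac:(lra) hx hxn hbn (K0 * s)
    ltac:(nra) (fun z hz => HK0 eps t s z y H hz hy)) as B0.
  pose proof (increment_le_of_grad_envelope f b s x y n hb ltac:(lra) hx hxn hbn (K1 * s ^ 2)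
    ltac:(pose proof (pow2_ge_0 s); nra) (fun z hz => HK1 eps t s z y H hz hy)) as B1.
  unfold f in B0, B1. set (E := exp (- (b * s * Rabs (IZR x - IZR y)))) in *.
  set (N := IZR (Z.abs n)) in *. assert (hE : 0 < E) by apply exp_pos.
  assert (hN : 0 <= N) by (apply IZR_le; lia).
  destruct (Rle_dec 1 (N * s)) as [h1|h1].
  - rewrite Rmin_left by lra. eapply Rle_trans; [exact B0|].
    assert (0 <= K1 * exp (2 * b) * s * E) by (repeat apply Rmult_le_pos; lra).
    replace ((K0 * (exp (2 * b) + 1) + K1 * exp (2 * b)) * E * (s * 1))
      with (K0 * s * (exp (2 * b) + 1) * E + K1 * exp (2 * b) * s * E) by ring.
    lra.
  - rewrite Rmin_right by lra. eapply Rle_trans; [exact B1|].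
    assert (0 <= K0 * (exp (2 * b) + 1) * E * (s * (N * s))) by (repeat apply Rmult_le_pos; lra).
    replace ((K0 * (exp (2 * b) + 1) + K1 * exp (2 * b)) * E * (s * (N * s)))
      with (K0 * (exp (2 * b) + 1) * E * (s * (N * s)) + N * (K1 * s ^ 2 * exp (2 * b)) * E)
      by ring.
    lra.
Qed.

End RobinIncrement.

Theorem mainTheorem5 (A T b : R) (hT : 0 < T) (hb : 0 <= b) :
  exists C : R, exists eps0 : R, 0 < eps0 /\
  forall eps : R, 0 < eps < eps0 ->
  forall t : R, 0 <= t <= T / (eps ^ 2) ->
  forall v : R, 0 <= v <= 1 ->
  forall x y : nat, forall n : Z,
  (b = 0 \/ (Z.abs n <= Zceil (sqrt t))%Z) ->
  (0 <= Z.of_nat x + n)%Z ->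
  Rabs (robin A eps t (Z.of_nat x + n) (Z.of_nat y) - robin A eps t (Z.of_nat x) (Z.of_nat y))
  <= C * min1_negpow t ((1 + v) / 2) * rpow (IZR (Z.abs n)) v
       * exp (- b * Rabs (INR x - INR y) * min1_negpow t (1 / 2)).
Proof.
  destruct (robin_increment_le A (T + 1) b ltac:(lra) hb) as [M [hM HM]].
  exists M, (/ (2 * (Rabs A + 1))).
  split; [apply Rinv_0_lt_compat; pose proof (Rabs_pos A); lra|].
  intros eps heps t ht v hv x y n hn hxn.
  pose proof (robin_regime_of_small_eps A T eps t hT heps ht) as H.
  pose proof H as [_ [_ [_ [hsc _]]]].
  set (s := min1_negpow t (1 / 2)) in *.
  assert (hshift : b * s * IZR (Z.abs n) <= 2 * b).
  { destruct hn as [-> | hn]; [lra|].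
    pose proof (scale_mul_shift_le t s n (proj1 ht) hsc hn). nra. }
  eapply Rle_trans; [apply (HM eps t s (Z.of_nat x) (Z.of_nat y) n H); [lia | lia | exact hxn
    | exact hshift]|].
  rewrite <- !INR_IZR_INZ.
  replace (- b * Rabs (INR x - INR y) * s) with (- (b * s * Rabs (INR x - INR y))) by ring.
  pose proof (exp_pos (- (b * s * Rabs (INR x - INR y)))).
  pose proof (scale_min_le_interpolation t v (IZR (Z.abs n)) (proj1 ht) hv) as Hint.
  assert (hN : IZR (Z.abs n) = 0 \/ 1 <= IZR (Z.abs n)).
  { destruct (Z.eq_dec n 0) as [-> | hn0]; [now left | right; apply IZR_le; lia]. }
  specialize (Hint hN). fold s in Hint.
  replace (M * min1_negpow t ((1 + v) / 2) * rpow (IZR (Z.abs n)) v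
      * exp (- (b * s * Rabs (INR x - INR y))))
    with (M * exp (- (b * s * Rabs (INR x - INR y)))
      * (min1_negpow t ((1 + v) / 2) * rpow (IZR (Z.abs n)) v)) by ring.
  apply Rmult_le_compat_l; [nra | exact Hint].
Qed.
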